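(* Let $i \in \mathbb{N}_0$. (i) Suppose that the mesh $\mathcal{T}_h$ satisfies the angle condition $\int_\Omega \nabla\varphi_{z}\cdot\nabla\varphi_{z'} \leq 0$ for all vertices $z \neq z'$. The approximations generated by the tangent plane scheme satisfy the discrete energy law \[ \mathcal{J}_h(\boldsymbol{m}_h^{i+1},\boldsymbol{v}_h^{i+1}) + \alpha k \|\boldsymbol{v}_h^{i+1}\|_h^2 + \frac{\tau k^2}{2} \|d_t \boldsymbol{v}_h^{i+1}\|_h^2 + \frac{k^2}{2} \|\nabla\boldsymbol{v}_h^{i+1}\|_{\boldsymbol{L}^2(\Omega)}^2 \leq \mathcal{J}_h(\boldsymbol{m}_h^i,\boldsymbol{v}_h^i). \] (ii) The approximations generated by the nonlinear angular momentum method satisfy the discrete energy law \[ \mathcal{J}_h(\boldsymbol{m}_h^{i+1},\boldsymbol{w}_h^{i+1}) + \alpha k \|d_t\boldsymbol{m}_h^{i+1}\|_h^2 = \mathcal{J}_h(\boldsymbol{m}_h^i,\boldsymbol{w}_h^i). \] (iii) The approximations generated by the linearized angular momentum method satisfy the discrete energy law \[ \mathcal{J}_h(\boldsymbol{m}_h^{i+1},\boldsymbol{w}_h^{i+1}) + \alpha k \|d_t\boldsymbol{m}_h^{i+1}\|_h^2 + k \big(\boldsymbol{m}_h^{i+1/2} \times \boldsymbol{r}_h^i, \mathcal{P}_h\boldsymbol{h}_{\mathrm{eff}}[\boldsymbol{m}_h^{i+1/2}] - \alpha \, d_t\boldsymbol{m}_h^{i+1}\big)_h = \mathcal{J}_h(\boldsymbol{m}_h^i,\boldsymbol{w}_h^i).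 \]
   Context: Setting: $\Omega\subset\mathbb{R}^d$ ($d=2,3$) is a bounded polytopal Lipschitz domain; $\alpha>0$, $\tau>0$ are constants (Gilbert damping and angular momentum relaxation time) of the inertial Landau–Lifshitz–Gilbert equation $\partial_t\boldsymbol{m} = -\boldsymbol{m}\times(\boldsymbol{h}_{\mathrm{eff}}[\boldsymbol{m}] - \alpha\partial_t\boldsymbol{m} - \tau\partial_{tt}\boldsymbol{m})$. The energy is $\mathcal{E}[\boldsymbol{m}] = \frac12\|\nabla\boldsymbol{m}\|_{\boldsymbol{L}^2(\Omega)}^2$ and the effective field is defined by $-\langle\boldsymbol{h}_{\mathrm{eff}}[\boldsymbol{m}],\boldsymbol{\phi}\rangle = (\nabla\boldsymbol{m},\nabla\boldsymbol{\phi})$ (an element of the dual of $\boldsymbol{H}^1(\Omega)$). Discretization: $k>0$ is a uniform time-step, $d_t\phi^{i+1} := (\phi^{i+1}-\phi^i)/k$, $\phi^{i+1/2} := (\phi^{i+1}+\phi^i)/2$. $\mathcal{T}_h$ is a shape-regular simplicial mesh of $\Omega$ with vertex set $\mathcal{N}_h$, $\mathcal{S}^1(\mathcal{T}_h)$ the space of continuous piecewise affine functions with nodal hat basis $\{\varphi_z\}_{z\in\mathcal{N}_h}$, $\mathcal{I}_h$ the (vector-valued) nodal interpolant. The mass-lumped product is $(\boldsymbol{\psi},\boldsymbol{\phi})_h = \int_\Omega \mathcal{I}_h[\boldsymbol{\psi}\cdot\boldsymbol{\phi}]$ with induced norm $\|\cdot\|_h$. The map $\mathcal{P}_h$ from the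 dual of $\boldsymbol{H}^1(\Omega)$ to $\mathcal{S}^1(\mathcal{T}_h)^3$ is defined by $(\mathcal{P}_h\boldsymbol{u},\boldsymbol{\phi}_h)_h = \langle\boldsymbol{u},\boldsymbol{\phi}_h\rangle$ for all $\boldsymbol{\phi}_h\in\mathcal{S}^1(\mathcal{T}_h)^3$. Let $\mathcal{M}_h := \{\boldsymbol{\phi}_h\in\mathcal{S}^1(\mathcal{T}_h)^3 : |\boldsymbol{\phi}_h(z)|=1 \ \forall z\in\mathcal{N}_h\}$ and, for $\boldsymbol{\psi}_h\in\mathcal{S}^1(\mathcal{T}_h)^3$, $\mathcal{K}_h[\boldsymbol{\psi}_h] := \{\boldsymbol{\phi}_h\in\mathcal{S}^1(\mathcal{T}_h)^3 : \boldsymbol{\psi}_h(z)\cdot\boldsymbol{\phi}_h(z)=0 \ \forall z\in\mathcal{N}_h\}$. The discrete total energy is $\mathcal{J}_h(\boldsymbol{m}_h,\boldsymbol{u}_h) = \mathcal{E}[\boldsymbol{m}_h] + \frac{\tau}{2}\|\boldsymbol{u}_h\|_h^2$. All algorithms start from $\boldsymbol{m}_h^0\in\mathcal{M}_h$, $\boldsymbol{v}_h^0\in\mathcal{K}_h[\boldsymbol{m}_h^0]$. Tangent plane scheme: for each $i$, compute $\boldsymbol{v}_h^{i+1}\in\mathcal{K}_h[\boldsymbol{m}_h^i]$ such that for all $\boldsymbol{\phi}_h\in\mathcal{K}_h[\boldsymbol{m}_h^i]$: $\tau(d_t\boldsymbol{v}_h^{i+1},\boldsymbol{\phi}_h)_h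 + \alpha(\boldsymbol{v}_h^{i+1},\boldsymbol{\phi}_h)_h + (\boldsymbol{m}_h^i\times\boldsymbol{v}_h^{i+1},\boldsymbol{\phi}_h)_h - k(\mathcal{P}_h\boldsymbol{h}_{\mathrm{eff}}[\boldsymbol{v}_h^{i+1}],\boldsymbol{\phi}_h)_h = (\mathcal{P}_h\boldsymbol{h}_{\mathrm{eff}}[\boldsymbol{m}_h^i],\boldsymbol{\phi}_h)_h$; then set $\boldsymbol{m}_h^{i+1} = \mathcal{I}_h[(\boldsymbol{m}_h^i + k\boldsymbol{v}_h^{i+1})/|\boldsymbol{m}_h^i + k\boldsymbol{v}_h^{i+1}|]$. Nonlinear angular momentum method: set $\boldsymbol{w}_h^0 = \mathcal{I}_h[\boldsymbol{m}_h^0\times\boldsymbol{v}_h^0]$; for each $i$, find $(\boldsymbol{m}_h^{i+1},\boldsymbol{w}_h^{i+1})\in\mathcal{M}_h\times\mathcal{K}_h[\boldsymbol{m}_h^{i+1}]$ such that for all $\boldsymbol{\phi}_h,\boldsymbol{\psi}_h\in\mathcal{S}^1(\mathcal{T}_h)^3$: $(d_t\boldsymbol{m}_h^{i+1},\boldsymbol{\phi}_h)_h = -(\boldsymbol{m}_h^{i+1/2}\times\boldsymbol{w}_h^{i+1/2},\boldsymbol{\phi}_h)_h$ and $\tau(d_t\boldsymbol{w}_h^{i+1},\boldsymbol{\psi}_h)_h = (\boldsymbol{m}_h^{i+1/2}\times\mathcal{P}_h\boldsymbol{h}_{\mathrm{eff}}[\boldsymbol{m}_h^{i+1/2}],\boldsymbol{\psi}_h)_h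 - \alpha(\boldsymbol{m}_h^{i+1/2}\times d_t\boldsymbol{m}_h^{i+1},\boldsymbol{\psi}_h)_h - (\boldsymbol{m}_h^{i+1/2}\times\boldsymbol{w}_h^{i+1/2},\boldsymbol{\psi}_h)_h$. Linearized angular momentum method: same initialization of $\boldsymbol{w}_h^0$; for each $i$, set $\boldsymbol{u}_h^{i,0}=\boldsymbol{m}_h^i$, $\boldsymbol{z}_h^{i,0}=\boldsymbol{w}_h^i$ and for $\ell\in\mathbb{N}_0$ compute $\boldsymbol{u}_h^{i,\ell+1}\in\mathcal{S}^1(\mathcal{T}_h)^3$ with $2(\boldsymbol{u}_h^{i,\ell+1},\boldsymbol{\phi}_h)_h + k(\boldsymbol{u}_h^{i,\ell+1}\times\boldsymbol{z}_h^{i,\ell},\boldsymbol{\phi}_h)_h = 2(\boldsymbol{m}_h^i,\boldsymbol{\phi}_h)_h$ for all $\boldsymbol{\phi}_h$, then $\boldsymbol{z}_h^{i,\ell+1}\in\mathcal{S}^1(\mathcal{T}_h)^3$ with $2\tau(\boldsymbol{z}_h^{i,\ell+1},\boldsymbol{\psi}_h)_h + k(\boldsymbol{u}_h^{i,\ell+1}\times\boldsymbol{z}_h^{i,\ell+1},\boldsymbol{\psi}_h)_h = k(\boldsymbol{u}_h^{i,\ell+1}\times\mathcal{P}_h\boldsymbol{h}_{\mathrm{eff}}[\boldsymbol{u}_h^{i,\ell+1}],\boldsymbol{\psi}_h)_h + 2\alpha(\boldsymbol{u}_h^{i,\ell+1}\times\boldsymbol{m}_h^i,\boldsymbol{\psi}_h)_h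 + 2\tau(\boldsymbol{w}_h^i,\boldsymbol{\psi}_h)_h$ for all $\boldsymbol{\psi}_h$, until $\|\boldsymbol{u}_h^{i,\ell+1}-\boldsymbol{u}_h^{i,\ell}\|_h + \|\boldsymbol{z}_h^{i,\ell+1}-\boldsymbol{z}_h^{i,\ell}\|_h\le\varepsilon$; with $\ell_i$ the first index meeting this, set $\boldsymbol{m}_h^{i+1} = 2\boldsymbol{u}_h^{i,\ell_i+1}-\boldsymbol{m}_h^i$, $\boldsymbol{w}_h^{i+1} = 2\boldsymbol{z}_h^{i,\ell_i+1}-\boldsymbol{w}_h^i$, and $\boldsymbol{r}_h^i := \boldsymbol{z}_h^{i,\ell_i+1}-\boldsymbol{z}_h^{i,\ell_i}$ (so $\|\boldsymbol{r}_h^i\|_h\le\varepsilon$). *)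

From HB Require Import structures.
From mathcomp Require Import all_boot all_order all_algebra.
From mathcomp Require Import reals.
Set Implicit Arguments.
Unset Strict Implicit.
Unset Printing Implicit Defensive.
Import Order.TTheory GRing.Theory Num.Theory.
Local Open Scope ring_scope.

Record mesh (R : realType) (d : nat) := Mesh {
  nV : nat;
  nT : nat;
  coord : 'I_nV -> 'rV[R]_d;
  elt : 'I_nT -> 'I_d.+1 -> 'I_nV }.
Arguments nV {R d} _.
Arguments nT {R d} _.
Arguments coord {R d} _ _.
Arguments elt {R d} _ _ _.

Section MeshDefs.
Variables (R : realType) (d : nat) (M : mesh R d).

Definition vtx := 'I_(nV M).
Definition simp := 'I_(nT M).

Definition edge_mx (T : simp) : 'M[R]_d :=
  \matrix_(j < d, l < d)
    (coord M (elt M T (lift ord0 j)) - coord M (elt M T ord0)) ord0 l.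

Definition vol (T : simp) : R := `|\det (edge_mx T)| / (d`!)%:R.

Definition vset (T : simp) : {set vtx} := [set elt M T j | j : 'I_d.+1].

(* gradient of the hat function phi_z restricted to T: the unique g with
   g . (p_{j+1} - p_0) = phi_z(p_{j+1}) - phi_z(p_0) *)
Definition grad_hat (T : simp) (z : vtx) : 'rV[R]_d :=
  (\row_(j < d) (((elt M T (lift ord0 j) == z) : nat)%:R
                 - ((elt M T ord0 == z) : nat)%:R))
  *m (invmx (edge_mx T))^T.

(* stiffness entry  \int_Omega grad phi_z . grad phi_z'  *)
Definition stiff (z z' : vtx) : R :=
  \sum_(T : simp) vol T * (grad_hat T z *m (grad_hat T z')^T) ord0 ord0.

(* lumped weight  \int_Omega phi_z = sum_{T containing z} |T|/(d+1) *)
Definition lweight (z : vtx) : R :=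
  \sum_(T : simp | z \in vset T) vol T / (d.+1)%:R.

Definition in_hull (T : simp) (x : 'rV[R]_d) : Prop :=
  exists lam : 'I_d.+1 -> R,
    [/\ forall j, 0 <= lam j, \sum_j lam j = 1
      & x = \sum_j lam j *: coord M (elt M T j)].

Definition shared_hull (T T' : simp) (x : 'rV[R]_d) : Prop :=
  exists lam : vtx -> R,
    [/\ forall z, 0 <= lam z,
        forall z, lam z != 0 -> z \in vset T :&: vset T',
        \sum_z lam z = 1
      & x = \sum_z lam z *: coord M z].

Definition conforming_mesh : Prop :=
  [/\ injective (coord M),
      forall T, \det (edge_mx T) != 0,
      forall z, exists T, z \in vset T,
      forall T T', vset T = vset T' -> T = T'
    & forall T T', T != T' ->
        forall x, (in_hull T x /\ in_hull T' x) <-> shared_hull T T' x].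

Definition angle_condition : Prop :=
  forall z z' : vtx, z != z' -> stiff z z' <= 0.

(* Vector calculus in R^3 and discrete fields S^1(T_h)^3, represented  *)
(* by their nodal values.                                              *)
Definition vdot (a b : 'rV[R]_3) : R := (a *m b^T) ord0 ord0.
Definition vnorm (a : 'rV[R]_3) : R := Num.sqrt (vdot a a).
Definition vcross (a b : 'rV[R]_3) : 'rV[R]_3 :=
  let a0 := a ord0 (inord 0) in let a1 := a ord0 (inord 1) in
  let a2 := a ord0 (inord 2) in
  let b0 := b ord0 (inord 0) in let b1 := b ord0 (inord 1) in
  let b2 := b ord0 (inord 2) in
  \row_(i < 3) [:: a1 * b2 - a2 * b1; a2 * b0 - a0 * b2;
                   a0 * b1 - a1 * b0]`_i.

Definition fe := {ffun vtx -> 'rV[R]_3}.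

(* nodal interpolant of the pointwise cross product *)
Definition fcross (u v : fe) : fe := [ffun z => vcross (u z) (v z)].

(* mass-lumped product (psi, phi)_h = \int I_h[psi . phi] and its norm *)
Definition lip (u v : fe) : R := \sum_z lweight z * vdot (u z) (v z).
Definition lnorm (u : fe) : R := Num.sqrt (lip u u).

Definition gradip (u v : fe) : R :=
  \sum_z \sum_z' stiff z z' * vdot (u z) (v z').

Definition energy (u : fe) : R := gradip u u / 2.

(* P_h h_eff[u]: (P_h h_eff[u], phi)_h = -(grad u, grad phi) *)
Definition Ph_heff (u : fe) : fe :=
  [ffun z => - ((lweight z)^-1 *: \sum_z' stiff z z' *: u z')].

Definition Jh (tau : R) (m u : fe) : R := energy m + tau / 2 * lnorm u ^+ 2.

Definition inMh (m : fe) : Prop := forall z, vnorm (m z) = 1.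
Definition inKh (m phi : fe) : Prop := forall z, vdot (m z) (phi z) = 0.

Definition dt (k : R) (a b : fe) : fe := k^-1 *: (a - b).
Definition mid (a b : fe) : fe := 2^-1 *: (a + b).

Definition tps_generated (alpha tau k : R) (m v : nat -> fe) : Prop :=
  inMh (m 0%N) /\ inKh (m 0%N) (v 0%N) /\
  forall i : nat,
    [/\ inKh (m i) (v i.+1),
        forall phi, inKh (m i) phi ->
          tau * lip (dt k (v i.+1) (v i)) phi + alpha * lip (v i.+1) phi
          + lip (fcross (m i) (v i.+1)) phi - k * lip (Ph_heff (v i.+1)) phi
          = lip (Ph_heff (m i)) phi
      & m i.+1 = [ffun z => (vnorm (m i z + k *: v i.+1 z))^-1
                              *: (m i z + k *: v i.+1 z)]].

Definition amm_generated (alpha tau k : R) (v0 : fe) (m w : nat -> fe) : Prop :=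
  inMh (m 0%N) /\ inKh (m 0%N) v0 /\ w 0%N = fcross (m 0%N) v0 /\
  forall i : nat,
    let mh := mid (m i.+1) (m i) in
    let wh := mid (w i.+1) (w i) in
    [/\ inMh (m i.+1), inKh (m i.+1) (w i.+1),
        forall phi, lip (dt k (m i.+1) (m i)) phi = - lip (fcross mh wh) phi
      & forall psi,
          tau * lip (dt k (w i.+1) (w i)) psi
          = lip (fcross mh (Ph_heff mh)) psi
            - alpha * lip (fcross mh (dt k (m i.+1) (m i))) psi
            - lip (fcross mh wh) psi].

(* linearized angular momentum method with fixed-point iterates u i l,
   z i l and stopping indices ell i *)
Definition lamm_generated (alpha tau k eps : R) (v0 : fe) (m w : nat -> fe)
    (u z : nat -> nat -> fe) (ell : nat -> nat) : Prop :=
  inMh (m 0%N) /\ inKh (m 0%N) v0 /\ w 0%N = fcross (m 0%N) v0 /\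
  forall i : nat,
    [/\ u i 0%N = m i /\ z i 0%N = w i,
        forall l : nat, (l <= ell i)%N ->
          (forall phi, 2 * lip (u i l.+1) phi + k * lip (fcross (u i l.+1) (z i l)) phi
                       = 2 * lip (m i) phi) /\
          (forall psi, 2 * tau * lip (z i l.+1) psi
                       + k * lip (fcross (u i l.+1) (z i l.+1)) psi
                       = k * lip (fcross (u i l.+1) (Ph_heff (u i l.+1))) psi
                         + 2 * alpha * lip (fcross (u i l.+1) (m i)) psi
                         + 2 * tau * lip (w i) psi),
        lnorm (u i (ell i).+1 - u i (ell i)) + lnorm (z i (ell i).+1 - z i (ell i)) <= eps,
        forall l : nat, (l < ell i)%N ->
          eps < lnorm (u i l.+1 - u i l) + lnorm (z i l.+1 - z i l)
      & m i.+1 = 2%:R *: u i (ell i).+1 - m i /\ w i.+1 = 2%:R *: z i (ell i).+1 - w i].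

Definition lamm_residual (z : nat -> nat -> fe) (ell : nat -> nat) (i : nat) : fe :=
  z i (ell i).+1 - z i (ell i).

End MeshDefs.

From HB Require Import structures.
From mathcomp Require Import all_boot all_order all_algebra sesquilinear.
From mathcomp Require Import reals ring lra.
Import Order.TTheory GRing.Theory Num.Theory.
Local Open Scope ring_scope.

(* All three laws come from testing each scheme with the discrete velocity.
   For the angular momentum methods the midpoint rule turns the increments of
   the two quadratic parts of [Jh] into [- k (d_t m, P_h h_eff[m^{i+1/2}])_h] and
   [tau k (d_t w, w^{i+1/2})_h]; testing the momentum equation with [w^{i+1/2}]
   and the magnetization equation with [P_h h_eff - alpha d_t m], the
   antisymmetry [(a x b, c)_h = - (a x c, b)_h] cancels everything except the
   damping term and, for the linearized method, the fixed-point residual.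
   For the tangent plane scheme, testing with [v^{i+1}] gives the law as an
   identity for the unprojected update [m^i + k v^{i+1}], whose nodal values have
   length at least one.  Under the angle condition the Dirichlet energy is a
   nonnegative combination of the [|u(z) - u(z')|^2], and nodal normalization is
   1-Lipschitz outside the unit ball, so the projection can only lower it. *)

Section SymmetricBilinear.
Context {R : comNzRingType} {V : lmodType R} {b : {bilinear V -> V -> R | *%R & *%R}}.
Hypothesis bC : forall u v, b u v = b v u.

Lemma bilinear_sqDZ u v s :
  b (u + s *: v) (u + s *: v) = b u u + 2 * s * b u v + s ^+ 2 * b v v.
Proof. by rewrite linearDl !linearDr !linearZl !linearZr /= (bC v u); ring. Qed.

Lemma bilinear_sqB u v : b u u - b v v = b (u - v) (u + v).
Proof. by rewrite linearBl !linearDr /= (bC v u); ring. Qed.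

End SymmetricBilinear.

Section Vectors.
Context {R : realType}.
Implicit Types (a b c : 'rV[R]_3) (s : R).

Lemma vdotE a b :
  vdot a b = a ord0 (inord 0) * b ord0 (inord 0) + a ord0 (inord 1) * b ord0 (inord 1)
           + a ord0 (inord 2) * b ord0 (inord 2).
Proof.
rewrite /vdot mxE !big_ord_recl big_ord0 !mxE addr0 addrA.
by congr (_ * _ + _ * _ + _ * _); congr (_ _ _); apply/val_inj; rewrite /= inordK.
Qed.

Lemma vcrossE0 a b : vcross a b ord0 (inord 0) =
  a ord0 (inord 1) * b ord0 (inord 2) - a ord0 (inord 2) * b ord0 (inord 1).
Proof. by rewrite mxE inordK. Qed.

Lemma vcrossE1 a b : vcross a b ord0 (inord 1) =
  a ord0 (inord 2) * b ord0 (inord 0) - a ord0 (inord 0) * b ord0 (inord 2).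
Proof. by rewrite mxE inordK. Qed.

Lemma vcrossE2 a b : vcross a b ord0 (inord 2) =
  a ord0 (inord 0) * b ord0 (inord 1) - a ord0 (inord 1) * b ord0 (inord 0).
Proof. by rewrite mxE inordK. Qed.

Lemma eq_row3 a b :
  a ord0 (inord 0) = b ord0 (inord 0) -> a ord0 (inord 1) = b ord0 (inord 1) ->
  a ord0 (inord 2) = b ord0 (inord 2) -> a = b.
Proof.
move=> e0 e1 e2; apply/rowP => j; rewrite -(inord_val j).
by case: j => -[|[|[|//]]] ?; rewrite ?e0 ?e1 ?e2.
Qed.

Ltac coord_ring := rewrite ?vdotE ?(vcrossE0, vcrossE1, vcrossE2, mxE); ring.

Lemma vdotC a b : vdot a b = vdot b a.
Proof. coord_ring. Qed.

Lemma vdot_is_bilinear : bilinear_for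
  (GRing.Scale.Law.clone _ _ *%R _) (GRing.Scale.Law.clone _ _ *%R _) (@vdot R).
Proof. by split=> ? ? ? ? /=; coord_ring. Qed.

HB.instance Definition _ :=
  bilinear_isBilinear.Build R 'rV[R]_3 'rV[R]_3 R _ _ (@vdot R) vdot_is_bilinear.

Lemma vdot_ge0 a : 0 <= vdot a a.
Proof. rewrite vdotE; nra. Qed.

Lemma vdot_crossC a b c : vdot (vcross a b) c = - vdot (vcross a c) b.
Proof. coord_ring. Qed.

Lemma vdot_cross_r a b : vdot (vcross a b) b = 0.
Proof. coord_ring. Qed.

Lemma vcrossPl s a b c : vcross (s *: a + b) c = s *: vcross a c + vcross b c.
Proof. by apply: eq_row3; coord_ring. Qed.

Lemma vcrossPr s a b c : vcross a (s *: b + c) = s *: vcross a b + vcross a c.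
Proof. by apply: eq_row3; coord_ring. Qed.

Lemma vcrossvv a : vcross a a = 0.
Proof. by apply: eq_row3; coord_ring. Qed.

Lemma vdot_CauchySchwarz a b : vdot a b ^+ 2 <= vdot a a * vdot b b.
Proof.
have lagrange : vdot a a * vdot b b = vdot a b ^+ 2 + vdot (vcross a b) (vcross a b).
  by coord_ring.
by rewrite lagrange lerDl vdot_ge0.
Qed.

Lemma vdotBB a b : vdot (a - b) (a - b) = vdot a a + vdot b b - 2 * vdot a b.
Proof. coord_ring. Qed.

Lemma vdotZBZ a b s t :
  vdot (s *: a - t *: b) (s *: a - t *: b)
  = s ^+ 2 * vdot a a + t ^+ 2 * vdot b b - 2 * s * t * vdot a b.
Proof. coord_ring. Qed.

Lemma vnorm_sq a : vnorm a ^+ 2 = vdot a a.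
Proof. by rewrite sqr_sqrtr // vdot_ge0. Qed.

Lemma vnorm_normalize a : vdot a a != 0 -> vnorm ((vnorm a)^-1 *: a) = 1.
Proof.
move=> a_neq0; rewrite {1}/vnorm linearZl linearZr /= mulrA -expr2 exprVn vnorm_sq.
by rewrite mulVf // sqrtr1.
Qed.

Lemma vdot_tangent_step a b s : vdot a a = 1 -> vdot a b = 0 ->
  1 <= vdot (a + s *: b) (a + s *: b).
Proof.
rewrite (bilinear_sqDZ vdotC) /= => -> ->.
by rewrite mulr0 addr0 lerDl mulr_ge0 ?sqr_ge0 ?vdot_ge0.
Qed.

(* With [p = |a|], [q = |b|] and [c = a.b] the gap is
   [(p - q)^2 + 2 (p q - 1) (1 - c / (p q))]. *)
Lemma vnormalize_dist a b : 1 <= vdot a a -> 1 <= vdot b b ->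
  vdot ((vnorm a)^-1 *: a - (vnorm b)^-1 *: b) ((vnorm a)^-1 *: a - (vnorm b)^-1 *: b)
  <= vdot (a - b) (a - b).
Proof.
move=> a_ge1 b_ge1; rewrite vdotZBZ vdotBB -!vnorm_sq.
have cs := vdot_CauchySchwarz a b; rewrite -!vnorm_sq -exprMn in cs.
have p_ge1 : 1 <= vnorm a by rewrite /vnorm -sqrtr1 ler_sqrt ?vdot_ge0.
have q_ge1 : 1 <= vnorm b by rewrite /vnorm -sqrtr1 ler_sqrt ?vdot_ge0.
move: (vnorm a) (vnorm b) (vdot a b) p_ge1 q_ge1 cs => p q c p_ge1 q_ge1 cs.
have p_gt0 : 0 < p := lt_le_trans ltr01 p_ge1.
have q_gt0 : 0 < q := lt_le_trans ltr01 q_ge1.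
have pq_gt0 : 0 < p * q by rewrite mulr_gt0.
have c_le : c <= p * q.
  have [c_le0|c_gt0] := lerP c 0; first lra.
  by rewrite -ler_sqr ?nnegrE ?(ltW c_gt0) ?(ltW pq_gt0).
set x := c / (p * q).
have x_le1 : x <= 1 by rewrite ler_pdivrMr // mul1r.
have c_eq : c = p * q * x by rewrite /x mulrC divfK // gt_eqF.
have -> : p^-1 ^+ 2 * p ^+ 2 + q^-1 ^+ 2 * q ^+ 2 - 2 * p^-1 * q^-1 * c = 2 - 2 * x.
  by rewrite c_eq; field; rewrite !gt_eqF.
have : 0 <= (p * q - 1) * (1 - x) by rewrite mulr_ge0 // subr_ge0 //; nra.
by rewrite c_eq; have := sqr_ge0 (p - q); lra.
Qed.

End Vectors.

Section DiscreteFields.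
Variables (R : realType) (d : nat) (M : mesh R d).
Implicit Types (u v w : fe M).

Lemma lipC u v : lip u v = lip v u.
Proof. by apply: eq_bigr => z _; rewrite vdotC. Qed.

Lemma lip_is_bilinear : bilinear_for
  (GRing.Scale.Law.clone _ _ *%R _) (GRing.Scale.Law.clone _ _ *%R _) (@lip R d M).
Proof.
have linl w s u v : lip (s *: u + v) w = s * lip u w + lip v w.
  rewrite /lip mulr_sumr -big_split /=; apply: eq_bigr => z _.
  by rewrite !ffunE linearPl /=; ring.
by split=> w s u v /=; rewrite ?linl // !(lipC w) linl.
Qed.

HB.instance Definition _ :=
  bilinear_isBilinear.Build R (fe M) (fe M) R _ _ (@lip R d M) lip_is_bilinear.

Lemma stiffC (z z' : vtx M) : stiff z z' = stiff z' z.
Proof.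
apply: eq_bigr => T _; rewrite !mxE; congr (_ * _).
by apply: eq_bigr => j _; rewrite !mxE mulrC.
Qed.

Lemma gradipC u v : gradip u v = gradip v u.
Proof.
rewrite /gradip exchange_big; apply: eq_bigr => z _; apply: eq_bigr => z' _.
by rewrite stiffC vdotC.
Qed.

Lemma gradip_is_bilinear : bilinear_for
  (GRing.Scale.Law.clone _ _ *%R _) (GRing.Scale.Law.clone _ _ *%R _) (@gradip R d M).
Proof.
have linl w s u v : gradip (s *: u + v) w = s * gradip u w + gradip v w.
  rewrite /gradip mulr_sumr -big_split /=; apply: eq_bigr => z _.
  rewrite mulr_sumr -big_split /=; apply: eq_bigr => z' _.
  by rewrite !ffunE linearPl /=; ring.
by split=> w s u v /=; rewrite ?linl // !(gradipC w) linl.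
Qed.

HB.instance Definition _ :=
  bilinear_isBilinear.Build R (fe M) (fe M) R _ _ (@gradip R d M) gradip_is_bilinear.

Lemma fcross_is_bilinear : bilinear_for
  (GRing.Scale.Law.clone _ _ *:%R _) (GRing.Scale.Law.clone _ _ *:%R _) (@fcross R d M).
Proof. by split=> w s u v; apply/ffunP => z; rewrite !ffunE ?vcrossPl ?vcrossPr. Qed.

HB.instance Definition _ :=
  bilinear_isBilinear.Build R (fe M) (fe M) (fe M) _ _ (@fcross R d M) fcross_is_bilinear.

Lemma lip_fcrossC u v w : lip (fcross u v) w = - lip (fcross u w) v.
Proof.
by rewrite /lip -sumrN; apply: eq_bigr => z _; rewrite !ffunE vdot_crossC mulrN.
Qed.

Lemma lip_fcross_r u v : lip (fcross u v) v = 0.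
Proof. by rewrite /lip big1 // => z _; rewrite !ffunE vdot_cross_r mulr0. Qed.

Lemma fcrossvv u : fcross u u = 0.
Proof. by apply/ffunP => z; rewrite !ffunE vcrossvv. Qed.

Lemma lweight_ge0 (z : vtx M) : 0 <= lweight z.
Proof. by apply: sumr_ge0 => T _; rewrite !divr_ge0. Qed.

Lemma lnorm_sq u : lnorm u ^+ 2 = lip u u.
Proof.
by rewrite sqr_sqrtr //; apply: sumr_ge0 => z _; rewrite mulr_ge0 ?lweight_ge0 ?vdot_ge0.
Qed.

Lemma grad_hat_sum (T : simp M) : \sum_z grad_hat T z = 0.
Proof.
have indicator_sum (e : vtx M) : \sum_z ((e == z) : nat)%:R = 1 :> R.
  by rewrite (bigD1 e) //= eqxx big1 ?addr0 // => z; rewrite eq_sym => /negbTE ->.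
rewrite -mulmx_suml [X in X *m _](_ : _ = 0) ?mul0mx //.
apply/rowP => j; rewrite summxE !mxE; under eq_bigr do rewrite mxE.
by rewrite sumrB !indicator_sum subrr.
Qed.

Lemma stiff_row_sum (z : vtx M) : \sum_z' stiff z z' = 0.
Proof.
rewrite exchange_big big1 // => T _; rewrite -mulr_sumr -summxE -mulmx_sumr.
by rewrite -linear_sum grad_hat_sum linear0 mulmx0 mxE mulr0.
Qed.

Lemma gradip_edge_sum u :
  gradip u u = - 2^-1 * \sum_z \sum_z' stiff z z' * vdot (u z - u z') (u z - u z').
Proof.
have diag0 (f : vtx M -> R) : \sum_z \sum_z' stiff z z' * f z = 0.
  by apply: big1 => z _; rewrite -mulr_suml stiff_row_sum mul0r.
have diag0' (f : vtx M -> R) : \sum_z \sum_z' stiff z z' * f z' = 0.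
  rewrite exchange_big /=; under eq_bigr do under eq_bigr do rewrite stiffC.
  exact: diag0.
suff -> : \sum_z \sum_z' stiff z z' * vdot (u z - u z') (u z - u z')
    = \sum_z \sum_z' stiff z z' * vdot (u z) (u z)
      + \sum_z \sum_z' stiff z z' * vdot (u z') (u z') - 2 * gradip u u.
  by rewrite diag0 diag0'; field.
rewrite /gradip mulr_sumr -big_split -sumrB /=; apply: eq_bigr => z _.
rewrite mulr_sumr -big_split -sumrB /=; apply: eq_bigr => z' _.
by rewrite vdotBB; ring.
Qed.

Definition nodal_normalize (U : fe M) : fe M := [ffun z => (vnorm (U z))^-1 *: U z].

Lemma energy_nodal_normalize (U : fe M) : angle_condition M ->
  (forall z, 1 <= vdot (U z) (U z)) -> energy (nodal_normalize U) <= energy U.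
Proof.
move=> angle U_ge1; rewrite /energy ler_pM2r ?invr_gt0 ?ltr0n // !gradip_edge_sum.
apply: ler_wnM2l; first by rewrite oppr_le0 invr_ge0 ler0n.
apply: ler_sum => z _; apply: ler_sum => z' _; rewrite !ffunE.
have [<-|z_neq] := eqVneq z z'; first by rewrite !subrr.
by apply: ler_wnM2l; [exact: angle | exact: vnormalize_dist].
Qed.

Section Schemes.
Variables (alpha tau k : R).
Hypotheses (HM : conforming_mesh M) (k_neq0 : k != 0).

Lemma lweight_gt0 (z : vtx M) : 0 < lweight z.
Proof.
case: HM => _ det_neq0 covered _ _; have [T zT] := covered z.
rewrite /lweight (bigD1 T) //= ltr_pwDl ?sumr_ge0 // => [|T' _].
  by rewrite !divr_gt0 ?normr_gt0 ?ltr0n ?fact_gt0 ?det_neq0.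
by rewrite !divr_ge0.
Qed.

Lemma lip_Ph_heff u v : lip (Ph_heff u) v = - gradip u v.
Proof.
transitivity (\sum_z - \sum_z' stiff z z' * vdot (u z') (v z)).
  apply: eq_bigr => z _; rewrite ffunE linearNl linearZl /= mulrN mulrA.
  rewrite mulfV ?gt_eqF ?lweight_gt0 // mul1r linear_sumlz.
  by congr -%R; apply: eq_bigr => z' _; rewrite linearZl.
rewrite sumrN exchange_big; congr -%R; apply: eq_bigr => z _; apply: eq_bigr => z' _.
by rewrite stiffC.
Qed.

Lemma scale_dt u v : k *: dt k u v = u - v.
Proof. by rewrite scalerA mulfV // scale1r. Qed.

Lemma scale_mid u v : 2 *: mid u v = u + v.
Proof. by rewrite scalerA mulfV ?scale1r // pnatr_eq0. Qed.

Lemma bilinear_sq_midpoint (b : {bilinear fe M -> fe M -> R | *%R & *%R}) :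
  (forall u v, b u v = b v u) ->
  forall u v, b u u = b v v + 2 * k * b (dt k u v) (mid u v).
Proof.
move=> bC u v; have := bilinear_sqB bC u v.
rewrite -scale_dt -scale_mid linearZl linearZr /= => diff.
by rewrite -[b u u](subrK (b v v)) diff; ring.
Qed.

Lemma Jh_midpoint_step m1 m0 w1 w0 :
  Jh tau m1 w1 = Jh tau m0 w0 - k * lip (dt k m1 m0) (Ph_heff (mid m1 m0))
                 + tau * k * lip (dt k w1 w0) (mid w1 w0).
Proof.
rewrite /Jh /energy !lnorm_sq (bilinear_sq_midpoint _ gradipC m1 m0).
rewrite (bilinear_sq_midpoint _ lipC w1 w0) /=.
by rewrite (lipC (dt k m1 m0)) lip_Ph_heff // (gradipC (dt k m1 m0)); field.
Qed.

Lemma Jh_angular_momentum_law m1 m0 w1 w0 :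
  let D := dt k m1 m0 in let mh := mid m1 m0 in let wh := mid w1 w0 in
  tau * lip (dt k w1 w0) wh
    = lip (fcross mh (Ph_heff mh)) wh - alpha * lip (fcross mh D) wh ->
  Jh tau m1 w1 + alpha * k * lnorm D ^+ 2
  + k * lip (D + fcross mh wh) (Ph_heff mh - alpha *: D) = Jh tau m0 w0.
Proof.
move=> D mh wh momentum.
rewrite (Jh_midpoint_step m1 m0 w1 w0) -/D -/mh -/wh [tau * k * _]mulrAC momentum.
rewrite !(lip_fcrossC mh _ wh) lnorm_sq {momentum}; clearbody D mh wh.
by rewrite linearDl /= !linearBr !linearZr /= (lipC D); ring.
Qed.

Lemma amm_energy_law v0 (m w : nat -> fe M) : amm_generated alpha tau k v0 m w ->
  forall i, Jh tau (m i.+1) (w i.+1) + alpha * k * lnorm (dt k (m i.+1) (m i)) ^+ 2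
            = Jh tau (m i) (w i).
Proof.
case=> _ [_ [_ step]] i; have /= [_ _ eq_m eq_w] := step i.
have /= := Jh_angular_momentum_law (m i.+1) (m i) (w i.+1) (w i).
rewrite linearDl /= eq_m addNr mulr0 addr0 => law; apply: law.
by rewrite eq_w lip_fcross_r subr0.
Qed.

Lemma lamm_energy_law eps v0 (m w : nat -> fe M) (u z : nat -> nat -> fe M) ell :
  lamm_generated alpha tau k eps v0 m w u z ell ->
  forall i, let mh := mid (m i.+1) (m i) in
  Jh tau (m i.+1) (w i.+1) + alpha * k * lnorm (dt k (m i.+1) (m i)) ^+ 2
  + k * lip (fcross mh (lamm_residual z ell i)) (Ph_heff mh - alpha *: dt k (m i.+1) (m i))
  = Jh tau (m i) (w i).
Proof.
case=> _ [_ [_ step]] i /=; rewrite /lamm_residual.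
have [_ fixed_point _ _ [em ew]] := step i.
have [eq_u eq_z] := fixed_point (ell i) (leqnn _).
set uu := u i (ell i).+1 in eq_u eq_z em *; set zz := z i (ell i).+1 in eq_z ew *.
set zl := z i (ell i) in eq_u *.
have mid_m : mid (m i.+1) (m i) = uu.
  by rewrite /mid em subrK scalerA mulVf ?scale1r ?pnatr_eq0.
have mid_w : mid (w i.+1) (w i) = zz.
  by rewrite /mid ew subrK scalerA mulVf ?scale1r ?pnatr_eq0.
have /= := Jh_angular_momentum_law (m i.+1) (m i) (w i.+1) (w i).
rewrite mid_m mid_w.
set D := dt k (m i.+1) (m i); set Dw := dt k (w i.+1) (w i).
have kD := scale_dt (m i.+1) (m i); have kDw := scale_dt (w i.+1) (w i).
rewrite -/D em in kD; rewrite -/Dw ew in kDw; clearbody D Dw.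
have eq_D phi : lip D phi = - lip (fcross uu zl) phi.
  apply: (mulfI k_neq0); have := congr1 (fun x => lip x phi) kD.
  rewrite /= linearZl /= !linearBl /= linearZl /= => ->.
  by have := eq_u phi; lra.
have momentum :
    tau * lip Dw zz = lip (fcross uu (Ph_heff uu)) zz - alpha * lip (fcross uu D) zz.
  apply: (mulfI k_neq0); rewrite [LHS]mulrCA mulrBr [k * (alpha * _)]mulrCA.
  have := congr1 (fun x => lip x zz) kDw.
  rewrite /= linearZl /= !linearBl /= linearZl /= => ->.
  have := congr1 (fun x => lip (fcross uu x) zz) kD.
  rewrite /= !linearZr /= !linearBr /= linearZr /= fcrossvv scaler0 sub0r.
  rewrite linearZl /= !linearBl /= linearNl /= => ->.
  by have := eq_z zz; rewrite lip_fcross_r; lra.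
move=> /(_ momentum) <-; congr (_ + k * _).
set X := Ph_heff uu - _; clearbody X.
by rewrite linearDl /= eq_D linearBr /= linearBl /=; ring.
Qed.

Lemma tps_unit_length (m v : nat -> fe M) :
  tps_generated alpha tau k m v -> forall i, inMh (m i).
Proof.
case=> m0_unit [_ step]; elim=> [|i IH] // z.
have [tangent _ ->] := step i; rewrite ffunE vnorm_normalize // lt0r_neq0 //.
apply: lt_le_trans ltr01 (vdot_tangent_step _ _ k _ (tangent z)).
by rewrite -vnorm_sq IH expr1n.
Qed.

Lemma tps_energy_law (m v : nat -> fe M) : angle_condition M ->
  tps_generated alpha tau k m v -> forall i,
  Jh tau (m i.+1) (v i.+1) + alpha * k * lnorm (v i.+1) ^+ 2
  + tau * k ^+ 2 / 2 * lnorm (dt k (v i.+1) (v i)) ^+ 2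
  + k ^+ 2 / 2 * gradip (v i.+1) (v i.+1)
  <= Jh tau (m i) (v i).
Proof.
move=> angle gen i; have unit := tps_unit_length m v gen i.
case: gen => _ [_ /(_ i) [tangent scheme m_next]].
have m_next_le : energy (m i.+1) <= energy (m i + k *: v i.+1).
  have -> : m i.+1 = nodal_normalize (m i + k *: v i.+1).
    by rewrite m_next; apply/ffunP => z; rewrite !ffunE.
  apply: energy_nodal_normalize => // z; rewrite !ffunE.
  by apply: (vdot_tangent_step _ _ _ _ (tangent z)); rewrite -vnorm_sq unit expr1n.
have tested := scheme (v i.+1) tangent.
rewrite lip_fcross_r !lip_Ph_heff // in tested.
have v_prev : v i = v i.+1 + (- k) *: dt k (v i.+1) (v i).
  by rewrite scaleNr scale_dt opprB addrC subrK.
move: m_next_le; rewrite /Jh /energy !lnorm_sq (bilinear_sqDZ gradipC) /=.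
rewrite {3 4}v_prev (bilinear_sqDZ lipC) /=.
move: tested; set Dv := dt k _ _; rewrite (lipC _ Dv).
by move=> /(congr1 ( *%R k)) tested; lra.
Qed.

End Schemes.
End DiscreteFields.

Theorem proposition3p6 (R : realType) (d : nat) (M : mesh R d)
    (alpha tau k : R) :
  (d = 2 \/ d = 3)%N -> conforming_mesh M ->
  0 < alpha -> 0 < tau -> 0 < k ->
  [/\
   (* (i) tangent plane scheme *)
   angle_condition M ->
   forall m v : nat -> fe M, tps_generated alpha tau k m v ->
   forall i : nat,
     Jh tau (m i.+1) (v i.+1) + alpha * k * lnorm (v i.+1) ^+ 2
     + tau * k ^+ 2 / 2 * lnorm (dt k (v i.+1) (v i)) ^+ 2
     + k ^+ 2 / 2 * gradip (v i.+1) (v i.+1)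
     <= Jh tau (m i) (v i),
   (* (ii) nonlinear angular momentum method *)
   forall (v0 : fe M) (m w : nat -> fe M),
   amm_generated alpha tau k v0 m w ->
   forall i : nat,
     Jh tau (m i.+1) (w i.+1) + alpha * k * lnorm (dt k (m i.+1) (m i)) ^+ 2
     = Jh tau (m i) (w i)
 & (* (iii) linearized angular momentum method *)
   forall (eps : R) (v0 : fe M) (m w : nat -> fe M) (u z : nat -> nat -> fe M)
          (ell : nat -> nat),
   0 < eps -> lamm_generated alpha tau k eps v0 m w u z ell ->
   forall i : nat,
     let mh := mid (m i.+1) (m i) in
     Jh tau (m i.+1) (w i.+1) + alpha * k * lnorm (dt k (m i.+1) (m i)) ^+ 2
     + k * lip (fcross mh (lamm_residual z ell i))
               (Ph_heff mh - alpha *: dt k (m i.+1) (m i))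
     = Jh tau (m i) (w i)].
Proof.
move=> _ HM _ _ k_gt0; have k_neq0 : k != 0 by rewrite gt_eqF.
split.
- by move=> angle m v; apply: tps_energy_law.
- by move=> v0 m w; apply: amm_energy_law.
- by move=> eps v0 m w u z ell _; apply: lamm_energy_law.
Qed.
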